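(* Let $\phi:\mathbb{M}_n\to\mathbb{M}_m$ be a positive linear map, and let $\phi^*:\mathbb{M}_m\to\mathbb{M}_n$ be its adjoint with respect to the Hilbert–Schmidt inner product $\langle A,B\rangle=\mathrm{Tr}[A^*B]$. Then \[ \mathrm{Tr}[K^*X^{+}K] \geq \mathrm{Tr}[\phi^*(K)^*\phi^*(X)^{+}\phi^*(K)] \] holds for all $(K,X)\in\mathbb{M}_m\times\mathbb{M}_m^+$ with $\ker(X)\subseteq\ker(K^* )$ if and only if $\phi$ satisfies the Schwarz inequality $\phi(K^*K)\geq\phi(K)^*\phi(K)$ for all $K\in\mathbb{M}_n$.
   Context: $\mathbb{M}_n$ denotes the $n\times n$ complex matrices and $\mathbb{M}_n^+$ the positive semidefinite ones. For a matrix $Z$, $Z^+$ denotes its Moore–Penrose generalized inverse. A linear map is positive if it maps positive semidefinite matrices to positive semidefinite matrices. No unitality of $\phi$ is assumed. *)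

(* complex matrices are 'M[algC]_n (algebraic complex numbers). *)
From HB Require Import structures.
From mathcomp Require Import all_boot all_order all_algebra all_field.
From Stdlib Require Import ClassicalEpsilon.
Set Implicit Arguments. Unset Strict Implicit. Unset Printing Implicit Defensive.
Import Order.TTheory GRing.Theory Num.Theory.
Local Open Scope ring_scope.

Definition mxadj (p q : nat) (A : 'M[algC]_(p, q)) : 'M[algC]_(q, p) :=
  (map_mx (fun x : algC => x^*) A)^T.

(* positive semidefinite: x^* A x >= 0 for every vector x (over C this forces A hermitian) *)
Definition psd (n : nat) (A : 'M[algC]_n) : Prop :=
  forall v : 'cV[algC]_n, 0 <= (mxadj v *m A *m v) 0 0.

Definition loewner_ge (n : nat) (A B : 'M[algC]_n) : Prop := psd (A - B).

Definition is_MP (n : nat) (A Y : 'M[algC]_n) : Prop :=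
  [/\ A *m Y *m A = A, Y *m A *m Y = Y,
      mxadj (A *m Y) = A *m Y & mxadj (Y *m A) = Y *m A].

Definition mpinv (n : nat) (A : 'M[algC]_n) : 'M[algC]_n :=
  epsilon (inhabits 0) (fun Y => is_MP A Y).

Definition positive_map (n m : nat) (phi : 'M[algC]_n -> 'M[algC]_m) : Prop :=
  forall A, psd A -> psd (phi A).

Definition hs_adjoint (n m : nat) (phi : 'M[algC]_n -> 'M[algC]_m)
  (psi : 'M[algC]_m -> 'M[algC]_n) : Prop :=
  forall (A : 'M[algC]_m) (B : 'M[algC]_n),
    \tr (mxadj A *m phi B) = \tr (mxadj (psi A) *m B).

Definition ker_sub (n : nat) (X Y : 'M[algC]_n) : Prop :=
  forall v : 'cV[algC]_n, X *m v = 0 -> Y *m v = 0.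

From HB Require Import structures.
From mathcomp Require Import all_boot all_order all_algebra all_field.
From mathcomp Require Import ring.
From Stdlib Require Import ClassicalEpsilon.

Set Implicit Arguments.
Unset Strict Implicit.
Unset Printing Implicit Defensive.

Import Order.TTheory GRing.Theory Num.Theory Num.Def.
Local Open Scope ring_scope.

(* Put Y := psi X.  Hilbert-Schmidt duality turns traces against Y into traces
   against X of phi-images, and both directions rest on the estimate
     2 Re Tr[W^* X G] <= Tr[W^* X W] + Tr[G^* X G]      (X >= 0).
   Schwarz => trace inequality: with Z := Y^+ psi(K), G := phi(Z) and
   t := Tr[psi(K)^* Y^+ psi(K)] one has Tr[K^* G] = t, and the Schwarz inequality
   for Z^* gives Tr[G^* X G] <= Tr[X phi(Z Z^* )] = t.  As ker X <= ker K^*,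
   K = X W with Tr[K^* X^+ K] = Tr[W^* X W], and the estimate yields
   2 t <= Tr[K^* X^+ K] + t.
   Trace inequality => Schwarz: for X >= 1 and K := X phi(Z), the estimate for Y
   and the trace inequality give Tr[X phi(Z) phi(Z)^*] <= Tr[X phi(Z Z^* )];
   X := 1 + s u u^* with s large then isolates u^* (phi(Z Z^* ) - phi(Z) phi(Z)^* ) u.
   As Y may be singular this needs phi((1 - Y Y^+) Z) = 0: X >= 1 forces
   phi(1 - Y Y^+) = 0, and a Kadison-type argument for positive maps spreads it. *)

Lemma affine_ge0_slope_ge0 (R : numFieldType) (a h : R) :
  (forall t, 0 <= t -> 0 <= a + t * h) -> 0 <= h.
Proof.
move=> ge0; have a_ge0 := ge0 0 (lexx 0); rewrite mul0r addr0 in a_ge0.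
have ah_ge0 := ge0 1 ler01; rewrite mul1r in ah_ge0.
have h_real : h \is Num.real.
  by have := realB (ger0_real ah_ge0) (ger0_real a_ge0); rewrite addrAC subrr add0r.
rewrite real_leNgt ?real0 //; apply/negP => h_lt0.
have t_ge0 : 0 <= (a + 1) / - h.
  by rewrite divr_ge0 ?addr_ge0 // oppr_ge0 ltW.
have := ge0 _ t_ge0.
by rewrite invrN mulrN mulNr divfK ?lt_eqF // opprD addrA subrr add0r ler0N1.
Qed.

Lemma affine_ge0_slope_eq0 (R : numFieldType) (a h : R) :
  (forall t, t \is Num.real -> 0 <= a + t * h) -> h = 0.
Proof.
move=> ge0; apply/eqP; rewrite eq_le -oppr_ge0.
apply/andP; split; apply: (@affine_ge0_slope_ge0 _ a) => t t_ge0.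
- by rewrite mulrN -mulNr ge0 // rpredN ger0_real.
- by rewrite ge0 // ger0_real.
Qed.

Section Adjoint.
Implicit Types p q r : nat.

Lemma mxadjE p q (A : 'M[algC]_(p, q)) i j : mxadj A i j = (A j i)^*.
Proof. by rewrite /mxadj !mxE. Qed.

Lemma mxadjK p q (A : 'M[algC]_(p, q)) : mxadj (mxadj A) = A.
Proof. by apply/matrixP=> i j; rewrite !mxadjE conjCK. Qed.

Lemma mxadj_mul p q r (A : 'M[algC]_(p, q)) (B : 'M[algC]_(q, r)) :
  mxadj (A *m B) = mxadj B *m mxadj A.
Proof. by rewrite /mxadj map_mxM trmx_mul. Qed.

Lemma mxadjD p q (A B : 'M[algC]_(p, q)) : mxadj (A + B) = mxadj A + mxadj B.
Proof. by rewrite /mxadj map_mxD linearD. Qed.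

Lemma mxadjB p q (A B : 'M[algC]_(p, q)) : mxadj (A - B) = mxadj A - mxadj B.
Proof. by rewrite /mxadj map_mxB linearB. Qed.

Lemma mxadjZ p q c (A : 'M[algC]_(p, q)) : mxadj (c *: A) = c^* *: mxadj A.
Proof. by rewrite /mxadj map_mxZ linearZ. Qed.

Lemma mxadj0 p q : mxadj (0 : 'M[algC]_(p, q)) = 0.
Proof. by rewrite /mxadj map_mx0 trmx0. Qed.

Lemma mxadj1 p : mxadj (1%:M : 'M[algC]_p) = 1%:M.
Proof. by rewrite /mxadj map_mx1 trmx1. Qed.

Lemma mxadj_delta p q i j : mxadj (delta_mx i j : 'M[algC]_(p, q)) = delta_mx j i.
Proof. by apply/matrixP=> a b; rewrite mxadjE !mxE conjC_nat andbC. Qed.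

Lemma mxadj_diag p (d : 'rV[algC]_p) : mxadj (diag_mx d) = diag_mx (map_mx conjC d).
Proof. by rewrite /mxadj map_diag_mx tr_diag_mx. Qed.

Lemma mxadj_trmxC p q (A : 'M[algC]_(p, q)) : mxadj A = map_mx conjC A^T.
Proof. by rewrite /mxadj map_trmx. Qed.

Lemma mxtrace_adj p (A : 'M[algC]_p) : \tr (mxadj A) = (\tr A)^*.
Proof. by rewrite /mxtrace rmorph_sum; apply: eq_bigr => i _; rewrite mxadjE. Qed.

End Adjoint.

Lemma mxtrace_delta n (C : 'M[algC]_n) i j : \tr (C *m delta_mx j i) = C i j.
Proof.
rewrite -(mul_delta_mx (0 : 'I_1)) mulmxA mxtrace_mulC -colE -rowE.
by rewrite /mxtrace big_ord1 !mxE.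
Qed.

Lemma mxtrace_mulmx_eq0 n (C : 'M[algC]_n) : (forall B, \tr (C *m B) = 0) -> C = 0.
Proof. by move=> C0; apply/matrixP=> i j; rewrite -mxtrace_delta C0 mxE. Qed.

Definition sesq n (H : 'M[algC]_n) (u w : 'cV[algC]_n) : algC :=
  (mxadj u *m H *m w) 0 0.

Lemma sesqD n (A B : 'M[algC]_n) u w : sesq (A + B) u w = sesq A u w + sesq B u w.
Proof. by rewrite /sesq mulmxDr mulmxDl !mxE. Qed.

Lemma sesqB n (A B : 'M[algC]_n) u w : sesq (A - B) u w = sesq A u w - sesq B u w.
Proof. by rewrite /sesq mulmxBr mulmxBl !mxE. Qed.

Lemma sesqZ n (A : 'M[algC]_n) c u w : sesq (c *: A) u w = c * sesq A u w.
Proof. by rewrite /sesq -scalemxAr -scalemxAl mxE. Qed.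

Lemma conj_sesq n (H : 'M[algC]_n) u w : (sesq H u w)^* = sesq (mxadj H) w u.
Proof. by rewrite /sesq -mxadjE !mxadj_mul mxadjK mulmxA. Qed.

Lemma sesq_delta n (H : 'M[algC]_n) i j :
  sesq H (delta_mx i 0) (delta_mx j 0) = H i j.
Proof. by rewrite /sesq mxadj_delta -rowE -colE !mxE. Qed.

Lemma sesq_mulmx n (X M : 'M[algC]_n) u w :
  sesq (mxadj M *m X *m M) u w = sesq X (M *m u) (M *m w).
Proof. by rewrite /sesq mxadj_mul !mulmxA. Qed.

Lemma sesq_mxtrace n (A : 'M[algC]_n) v : sesq A v v = \tr (A *m (v *m mxadj v)).
Proof. by rewrite mulmxA mxtrace_mulC /mxtrace big_ord1 /sesq mulmxA. Qed.

Lemma sesq_polar n (H : 'M[algC]_n) u w c :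
  sesq H (u + c *: w) (u + c *: w) =
  sesq H u u + c * sesq H u w + c^* * sesq H w u + c^* * c * sesq H w w.
Proof.
by rewrite /sesq mxadjD mxadjZ !mulmxDl !mulmxDr -!scalemxAl -!scalemxAr !mxE; ring.
Qed.

Lemma sesq_eq0 n (H : 'M[algC]_n) : (forall v, sesq H v v = 0) -> H = 0.
Proof.
move=> H0; apply/matrixP=> i j; rewrite mxE.
have h1 := sesq_polar H (delta_mx i 0) (delta_mx j 0) 1.
have hi := sesq_polar H (delta_mx i 0) (delta_mx j 0) 'i.
rewrite !H0 !sesq_delta conjC1 conjCi !mulr0 !addr0 !add0r !mul1r in h1 hi.
have /eqP : 'i * (H i j - H j i) = 0 by rewrite mulrBr hi mulNr.
rewrite mulf_eq0 (negPf (neq0Ci _)) subr_eq0 => /eqP Hji.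
by move/eqP: h1; rewrite -Hji -mulr2n eq_sym mulrn_eq0 => /eqP.
Qed.

Lemma psd_herm n (A : 'M[algC]_n) : psd A -> mxadj A = A.
Proof.
move=> A_psd; apply/eqP; rewrite -subr_eq0; apply/eqP/sesq_eq0 => v.
have /ger0_real/CrealP vAv_real : 0 <= sesq A v v by apply: A_psd.
by rewrite sesqB -conj_sesq vAv_real subrr.
Qed.

Lemma mxadj_mul_ge0 p (w : 'cV[algC]_p) : 0 <= (mxadj w *m w) 0 0.
Proof. by rewrite mxE; apply: sumr_ge0 => k _; rewrite mxadjE mulrC mul_conjC_ge0. Qed.

Lemma psd1 n : psd (1%:M : 'M[algC]_n).
Proof. by move=> v; rewrite mulmx1 mxadj_mul_ge0. Qed.

Lemma psd_mul_mxadj n p (B : 'M[algC]_(n, p)) : psd (B *m mxadj B).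
Proof.
by move=> v; have := mxadj_mul_ge0 (mxadj B *m v); rewrite mxadj_mul mxadjK !mulmxA.
Qed.

Lemma psdD n (A B : 'M[algC]_n) : psd A -> psd B -> psd (A + B).
Proof. by move=> A_psd B_psd v; rewrite mulmxDr mulmxDl mxE addr_ge0. Qed.

Lemma psdZ n (A : 'M[algC]_n) c : 0 <= c -> psd A -> psd (c *: A).
Proof. by move=> c_ge0 A_psd v; rewrite -scalemxAr -scalemxAl mxE mulr_ge0. Qed.

Lemma psd_spectral n (A : 'M[algC]_n) : psd A ->
  exists U : 'M[algC]_n, exists d : 'rV[algC]_n,
    [/\ U *m mxadj U = 1%:M, mxadj U *m U = 1%:M, forall i, 0 <= d 0 i
      & A = mxadj U *m diag_mx d *m U].
Proof.
move=> A_psd; have A_normal : A \is normalmx.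
  by apply/normalmxP; rewrite -mxadj_trmxC psd_herm.
move/orthomx_spectralP: A_normal; set U := spectralmx A; set d := spectral_diag A.
have UU' : U *m mxadj U = 1%:M.
  by rewrite mxadj_trmxC; apply/unitarymxP/spectral_unitarymx.
rewrite invmx_unitary ?spectral_unitarymx // -mxadj_trmxC => A_eq.
exists U, d; split => // [|i]; first exact: mulmx1C.
have -> : d 0 i = (U *m A *m mxadj U) i i.
  by rewrite A_eq !mulmxA UU' mul1mx -mulmxA UU' mulmx1 mxE eqxx mulr1n.
by rewrite -sesq_delta -[U in U *m A]mxadjK sesq_mulmx; apply: A_psd.
Qed.

Lemma psd_factor n (A : 'M[algC]_n) : psd A -> exists B : 'M_n, A = B *m mxadj B.
Proof.
move=> /psd_spectral [U [d [_ _ d_ge0 ->]]].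
exists (mxadj U *m diag_mx (map_mx sqrtC d)).
rewrite mxadj_mul mxadjK mxadj_diag !mulmxA -[in RHS](mulmxA (mxadj U)) mulmx_diag.
congr (_ *m diag_mx _ *m _); apply/rowP=> i; rewrite !mxE.
by rewrite conj_Creal ?sqrtC_real // -expr2 sqrtCK.
Qed.

Lemma mxtrace_mxadj_mul_ge0 n (X M : 'M[algC]_n) :
  psd X -> 0 <= \tr (mxadj M *m X *m M).
Proof.
by move=> X_psd; apply: sumr_ge0 => j _; rewrite -sesq_delta sesq_mulmx; apply: X_psd.
Qed.

Lemma mxtrace_psd_mul_ge0 n (X P : 'M[algC]_n) : psd X -> psd P -> 0 <= \tr (X *m P).
Proof.
move=> /psd_factor [B ->] P_psd.
by rewrite -mulmxA mxtrace_mulC mxtrace_mxadj_mul_ge0.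
Qed.

Lemma psd_mxtrace_eq0 n (P : 'M[algC]_n) : psd P -> \tr P = 0 -> P = 0.
Proof.
move=> /psd_factor [B ->] /eqP.
rewrite psumr_eq0 => [/allP BB0|i _]; last by rewrite -sesq_delta; apply: psd_mul_mxadj.
suff -> : B = 0 by rewrite mul0mx.
apply/matrixP=> i k; have /implyP/(_ isT) := BB0 i (mem_index_enum i).
rewrite mxE psumr_eq0 => [/allP/(_ k (mem_index_enum k))/implyP/(_ isT)|l _].
  by rewrite mxadjE mul_conjC_eq0 mxE => /eqP.
by rewrite mxadjE mul_conjC_ge0.
Qed.

Lemma psd_MP_exists n (A : 'M[algC]_n) : psd A -> exists Y, is_MP A Y.
Proof.
move=> /psd_spectral [U [d [UU' _ d_ge0 ->]]].
set D := diag_mx d; set E := diag_mx (map_mx GRing.inv d).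
have mulU (B C : 'M[algC]_n) :
    mxadj U *m B *m U *m (mxadj U *m C *m U) = mxadj U *m (B *m C) *m U.
  by rewrite !mulmxA -[_ *m U *m mxadj U]mulmxA UU' mulmx1.
have adjU (B : 'M[algC]_n) : mxadj (mxadj U *m B *m U) = mxadj U *m mxadj B *m U.
  by rewrite !mxadj_mul mxadjK mulmxA.
have DE_herm : mxadj (D *m E) = D *m E.
  rewrite mulmx_diag mxadj_diag; congr diag_mx; apply/rowP=> i.
  by rewrite !mxE conj_Creal // realM ?realV ?ger0_real ?d_ge0.
exists (mxadj U *m E *m U); split; rewrite !mulU ?adjU.
- congr (_ *m _ *m _); rewrite !mulmx_diag; congr diag_mx; apply/rowP=> i; rewrite !mxE.
  by have [->|d0] := eqVneq (d 0 i) 0; rewrite ?mulr0 // mulfV // mul1r.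
- congr (_ *m _ *m _); rewrite !mulmx_diag; congr diag_mx; apply/rowP=> i; rewrite !mxE.
  by have [->|d0] := eqVneq (d 0 i) 0; rewrite ?invr0 ?mul0r // mulVf // mul1r.
- by rewrite DE_herm.
- by rewrite diag_mxC DE_herm.
Qed.

Lemma MP_unique n (A Y1 Y2 : 'M[algC]_n) : is_MP A Y1 -> is_MP A Y2 -> Y1 = Y2.
Proof.
case=> AYA1 YAY1 AY1 YA1 [AYA2 YAY2 AY2 YA2].
have A'_AY2 : mxadj A = mxadj A *m (A *m Y2) by rewrite -{1}AYA2 mxadj_mul AY2.
have A'_Y1A : mxadj A = (Y1 *m A) *m mxadj A by rewrite -{1}AYA1 -mulmxA mxadj_mul YA1.
have -> : Y1 = Y1 *m A *m Y2.
  transitivity (Y1 *m mxadj (A *m Y1)); first by rewrite AY1 mulmxA YAY1.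
  by rewrite mxadj_mul A'_AY2 (mulmxA (mxadj Y1)) -mxadj_mul AY1 !mulmxA YAY1.
symmetry; transitivity (mxadj (Y2 *m A) *m Y2); first by rewrite YA2 YAY2.
by rewrite mxadj_mul A'_Y1A -!mulmxA (mulmxA (mxadj A)) -mxadj_mul YA2 YAY2.
Qed.

Lemma MP_mxadj n (A Y : 'M[algC]_n) : mxadj A = A -> is_MP A Y -> is_MP A (mxadj Y).
Proof.
move=> A_herm [AYA YAY AY YA]; split.
- by rewrite -{1 2}A_herm -!mxadj_mul mulmxA AYA A_herm.
- by rewrite -{1}A_herm -!mxadj_mul mulmxA YAY.
- by rewrite mxadj_mul mxadjK A_herm -{1}YA mxadj_mul A_herm.
- by rewrite mxadj_mul mxadjK A_herm -{1}AY mxadj_mul A_herm.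
Qed.

Section MPInverse.
Variables (n : nat) (Y : 'M[algC]_n).
Hypothesis Y_psd : psd Y.

Lemma mpinv_MP : is_MP Y (mpinv Y).
Proof.
have [Y' Y'_MP] := psd_MP_exists Y_psd.
by apply: (epsilon_spec (inhabits 0) (fun Y' => is_MP Y Y')); exists Y'.
Qed.

Lemma mxadj_mpinv : mxadj (mpinv Y) = mpinv Y.
Proof. exact: MP_unique (MP_mxadj (psd_herm Y_psd) mpinv_MP) mpinv_MP. Qed.

Lemma mulmx_mpinvK : Y *m mpinv Y *m Y = Y.
Proof. by case: mpinv_MP. Qed.

Lemma mpinv_mulmxK : mpinv Y *m Y *m mpinv Y = mpinv Y.
Proof. by case: mpinv_MP. Qed.

Lemma mxadj_mulmx_mpinv : mxadj (Y *m mpinv Y) = Y *m mpinv Y.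
Proof. by case: mpinv_MP. Qed.

Lemma mulmx_mpinvC : Y *m mpinv Y = mpinv Y *m Y.
Proof. by rewrite -mxadj_mulmx_mpinv mxadj_mul mxadj_mpinv psd_herm. Qed.

Lemma mpinv_quad (A : 'M[algC]_n) :
  mxadj (mpinv Y *m A) *m Y *m (mpinv Y *m A) = mxadj A *m mpinv Y *m A.
Proof.
rewrite mxadj_mul mxadj_mpinv -!mulmxA (mulmxA Y).
by rewrite (mulmxA (mpinv Y)) (mulmxA (mpinv Y)) mpinv_mulmxK.
Qed.

Lemma mpinv_quad_mulmx (F : 'M[algC]_n) :
  mxadj (Y *m F) *m mpinv Y *m (Y *m F) = mxadj F *m Y *m F.
Proof.
rewrite mxadj_mul (psd_herm Y_psd) -!mulmxA (mulmxA (mpinv Y)).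
by rewrite (mulmxA Y) (mulmxA Y) mulmx_mpinvK.
Qed.

End MPInverse.

Lemma ker_sub_mulmx n (X N M : 'M[algC]_n) : ker_sub X N -> X *m M = 0 -> N *m M = 0.
Proof.
move=> XN XM0; apply/matrixP=> i j.
have := XN (M *m delta_mx j 0); rewrite mulmxA XM0 mul0mx => /(_ erefl).
by rewrite mulmxA -colE => /colP/(_ i); rewrite !mxE => ->.
Qed.

Lemma mxtrace_cross_le n (X W G : 'M[algC]_n) : psd X ->
  \tr (mxadj W *m X *m G) + (\tr (mxadj W *m X *m G))^*
    <= \tr (mxadj W *m X *m W) + \tr (mxadj G *m X *m G).
Proof.
move=> X_psd; rewrite -mxtrace_adj !mxadj_mul mxadjK (psd_herm X_psd) mulmxA -subr_ge0.
have -> : \tr (mxadj W *m X *m W) + \tr (mxadj G *m X *m G)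
    - (\tr (mxadj W *m X *m G) + \tr (mxadj G *m X *m W))
    = \tr (mxadj (W - G) *m X *m (W - G)).
  by rewrite mxadjB !mulmxBl !mulmxBr !linearB /=; ring.
exact: mxtrace_mxadj_mul_ge0.
Qed.

Lemma mxtrace_mpinv_cross_le n (Y A Z : 'M[algC]_n) : psd Y ->
  \tr (mxadj A *m (Y *m mpinv Y) *m Z) + (\tr (mxadj A *m (Y *m mpinv Y) *m Z))^*
    <= \tr (mxadj A *m mpinv Y *m A) + \tr (mxadj Z *m Y *m Z).
Proof.
move=> Y_psd; have := mxtrace_cross_le (mpinv Y *m A) Z Y_psd.
by rewrite mpinv_quad // mxadj_mul mxadj_mpinv // mulmx_mpinvC // !mulmxA.
Qed.

Lemma mul_mxadj_expand p q (u w : 'M[algC]_(p, q)) c :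
  (u + c *: w) *m mxadj (u + c *: w) =
  u *m mxadj u + c^* *: (u *m mxadj w) + c *: (w *m mxadj u)
    + (c * c^*) *: (w *m mxadj w).
Proof.
rewrite mxadjD mxadjZ !mulmxDl !mulmxDr -!scalemxAl -!scalemxAr.
by apply/matrixP=> i j; rewrite !mxE; ring.
Qed.

Lemma mul_mxadj_polar p q (u w : 'M[algC]_(p, q)) :
  u *m mxadj w = 2^-1 *: ((u + w) *m mxadj (u + w) - u *m mxadj u - w *m mxadj w
    + 'i *: ((u + 'i *: w) *m mxadj (u + 'i *: w) - u *m mxadj u - w *m mxadj w)).
Proof.
have := mul_mxadj_expand u w 1; rewrite !scale1r conjC1 mulr1 scale1r => ->.
rewrite mul_mxadj_expand conjCi mulrN -expr2 sqrCi opprK scale1r.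
move: (u *m mxadj u) (u *m mxadj w) (w *m mxadj u) (w *m mxadj w) => a b c d.
have -> : a + - 'i *: b + 'i *: c + d - a - d = - 'i *: b + 'i *: c.
  by apply/matrixP=> i j; rewrite !mxE; ring.
rewrite (scalerDr 'i) !(scalerA 'i) mulrN -expr2 sqrCi opprK scale1r scaleN1r.
by apply/matrixP=> i j; rewrite !mxE; field.
Qed.

Section PositiveMap.
Variables (n m : nat) (phi : {linear 'M[algC]_n -> 'M[algC]_m}).
Hypothesis phi_pos : positive_map phi.

Lemma positive_map_mxadj M : phi (mxadj M) = mxadj (phi M).
Proof.
pose sa A := phi (mxadj A) = mxadj (phi A).
have sa0 : sa 0 by rewrite /sa mxadj0 linear0 mxadj0.
have saD A B : sa A -> sa B -> sa (A + B).
  by rewrite /sa mxadjD !linearD /= mxadjD => -> ->.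
have saZ c A : sa A -> sa (c *: A).
  by rewrite /sa mxadjZ !linearZ /= mxadjZ => ->.
have saB A B : sa A -> sa B -> sa (A - B).
  by move=> saA saB; rewrite -scaleN1r; apply: (saD) => //; apply: (saZ).
have sa_psd P : psd P -> sa P.
  by move=> P_psd; rewrite /sa (psd_herm P_psd) (psd_herm (phi_pos P_psd)).
have sa_outer (u w : 'cV[algC]_n) : sa (u *m mxadj w).
  rewrite mul_mxadj_polar; apply: (saZ); apply: (saD); last apply: (saZ).
  1,2: by apply: (saB); first apply: (saB); apply/sa_psd/psd_mul_mxadj.
rewrite -/(sa M) [M]matrix_sum_delta.
elim/big_ind: _ => // i _; elim/big_ind: _ => // j _; apply: (saZ).
by rewrite -(mul_delta_mx (0 : 'I_1)) -[delta_mx 0 j]mxadj_delta.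
Qed.

Lemma positive_map_mul_mxadj_eq0 (Q : 'M[algC]_n) :
  phi (Q *m mxadj Q) = 0 -> forall R, phi (R *m mxadj Q) = 0.
Proof.
move=> phiQ0.
(* phi((R + t Q)(R + t Q)^* ) >= 0 for every real t, so its linear term in t vanishes. *)
have sym0 R : phi (R *m mxadj Q + Q *m mxadj R) = 0.
  apply: sesq_eq0 => v.
  apply: (@affine_ge0_slope_eq0 _ (sesq (phi (R *m mxadj R)) v v)) => t t_real.
  have := phi_pos (psd_mul_mxadj (R + t *: Q)) v; rewrite -/(sesq _ v v).
  rewrite mul_mxadj_expand (conj_Creal t_real) !linearD !linearZ /= phiQ0 scaler0 addr0.
  by rewrite !sesqD !sesqZ mulrDr addrA.
move=> R; have /eqP := sym0 R; rewrite linearD addr_eq0 => /eqP phiRQ.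
have := sym0 ('i *: R).
rewrite mxadjZ conjCi -scalemxAl -scalemxAr linearD !linearZ /= phiRQ.
rewrite scalerN -scaleNr -scalerDl => /eqP; rewrite scaler_eq0 => /orP[|/eqP phiQR0].
  by rewrite -mulr2n mulrn_eq0 oppr_eq0 (negPf (neq0Ci _)).
by rewrite phiQR0 oppr0.
Qed.

Variable psi : 'M[algC]_m -> 'M[algC]_n.
Hypothesis phi_psi : hs_adjoint phi psi.

Lemma hs_adjoint_herm (X : 'M[algC]_m) : mxadj X = X -> mxadj (psi X) = psi X.
Proof.
move=> X_herm; apply/eqP; rewrite -subr_eq0; apply/eqP/mxtrace_mulmx_eq0 => B.
rewrite mulmxBl linearB /= -phi_psi; apply/eqP; rewrite subr_eq0; apply/eqP.
have -> : \tr (psi X *m B) = (\tr (mxadj (psi X) *m mxadj B))^*.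
  by rewrite -mxtrace_adj mxadj_mul !mxadjK mxtrace_mulC.
rewrite -phi_psi positive_map_mxadj -mxtrace_adj mxadj_mul !mxadjK X_herm.
by rewrite mxtrace_mulC.
Qed.

Lemma mxtrace_herm_adjoint (X : 'M[algC]_m) (B : 'M[algC]_n) :
  mxadj X = X -> \tr (X *m phi B) = \tr (psi X *m B).
Proof. by move=> X_herm; rewrite -{1}X_herm phi_psi hs_adjoint_herm. Qed.

Lemma hs_adjoint_psd (X : 'M[algC]_m) : psd X -> psd (psi X).
Proof.
move=> X_psd v; rewrite -/(sesq _ v v) sesq_mxtrace.
rewrite -mxtrace_herm_adjoint ?(psd_herm X_psd) //.
by apply: mxtrace_psd_mul_ge0 => //; apply/phi_pos/psd_mul_mxadj.
Qed.

Lemma mxtrace_phi_mul_mxadj (X : 'M[algC]_m) (Z : 'M[algC]_n) : psd X ->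
  \tr (X *m phi (Z *m mxadj Z)) = \tr (mxadj Z *m psi X *m Z).
Proof.
move=> X_psd; rewrite mxtrace_herm_adjoint ?(psd_herm X_psd) //.
by rewrite mulmxA mxtrace_mulC mulmxA.
Qed.

Lemma schwarz_mxtrace_ineq :
  (forall K : 'M[algC]_n, loewner_ge (phi (mxadj K *m K)) (mxadj (phi K) *m phi K)) ->
  forall K X : 'M[algC]_m, psd X -> ker_sub X (mxadj K) ->
    \tr (mxadj (psi K) *m mpinv (psi X) *m psi K) <= \tr (mxadj K *m mpinv X *m K).
Proof.
move=> schwarz K X X_psd XK.
have X_herm := psd_herm X_psd.
have [W ->] : exists W, K = X *m W.
  have /eqP : mxadj K *m (1%:M - mpinv X *m X) = 0.
    by apply: ker_sub_mulmx XK _; rewrite mulmxBr mulmx1 mulmxA mulmx_mpinvK ?subrr.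
  rewrite mulmxBr mulmx1 subr_eq0 => /eqP K'_eq; exists (mpinv X *m K).
  by rewrite -[LHS]mxadjK K'_eq !mxadj_mul mxadjK X_herm mxadj_mpinv // mulmxA.
rewrite mpinv_quad_mulmx //.
have Y_psd := hs_adjoint_psd X_psd.
set Y := psi X in Y_psd *; set Z := mpinv Y *m psi (X *m W); set G := phi Z.
set t := \tr (mxadj (psi (X *m W)) *m mpinv Y *m psi (X *m W)).
have WXG : \tr (mxadj W *m X *m G) = t.
  by rewrite -X_herm -mxadj_mul phi_psi mulmxA.
have XZZ : \tr (X *m phi (Z *m mxadj Z)) = t.
  by rewrite mxtrace_phi_mul_mxadj // mpinv_quad.
have t_ge0 : 0 <= t.
  by rewrite -XZZ mxtrace_psd_mul_ge0 //; apply/phi_pos/psd_mul_mxadj.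
have GXG : \tr (mxadj G *m X *m G) <= t.
  have := schwarz (mxadj Z); rewrite mxadjK positive_map_mxadj mxadjK.
  move=> /(mxtrace_psd_mul_ge0 X_psd).
  by rewrite mulmxBr linearB /= subr_ge0 XZZ mulmxA mxtrace_mulC mulmxA.
have := mxtrace_cross_le W G X_psd; rewrite WXG (conj_Creal (ger0_real t_ge0)) => cross.
by rewrite -(lerD2r t); apply: le_trans cross _; rewrite lerD2l.
Qed.

Lemma positive_map_mpinv_kernel (X : 'M[algC]_m) (Z : 'M[algC]_n) :
  psd X -> psd (X - 1%:M) -> phi ((1%:M - psi X *m mpinv (psi X)) *m Z) = 0.
Proof.
move=> X_psd X_ge1; have Y_psd := hs_adjoint_psd X_psd.
set Y := psi X in Y_psd *; set Q := 1%:M - Y *m mpinv Y.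
have YQ : Y *m Q = 0.
  by rewrite /Q mulmxBr mulmx1 mulmx_mpinvC // mulmxA mulmx_mpinvK // subrr.
have QQ : Q *m mxadj Q = Q.
  rewrite /Q mxadjB mxadj1 mxadj_mulmx_mpinv // mulmxBl mul1mx mulmxBr mulmx1.
  by rewrite mulmxA mulmx_mpinvK // subrr subr0.
have phiQ_psd : psd (phi Q) by rewrite -QQ; apply/phi_pos/psd_mul_mxadj.
have phiQ0 : phi Q = 0.
  (* 0 <= Tr[(X - 1) phi(Q)] = Tr[Y Q] - Tr[phi(Q)] = - Tr[phi(Q)] *)
  apply: psd_mxtrace_eq0 => //; apply/eqP; rewrite eq_le; apply/andP; split.
  - have := mxtrace_psd_mul_ge0 X_ge1 phiQ_psd.
    rewrite mulmxBl mul1mx linearB /= mxtrace_herm_adjoint ?(psd_herm X_psd) //.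
    by rewrite YQ mxtrace0 sub0r oppr_ge0.
  - by have := mxtrace_psd_mul_ge0 (@psd1 m) phiQ_psd; rewrite mul1mx.
have phiQQ0 : phi (Q *m mxadj Q) = 0 by rewrite QQ.
rewrite -[Q *m Z]mxadjK mxadj_mul positive_map_mxadj.
by rewrite (positive_map_mul_mxadj_eq0 phiQQ0) mxadj0.
Qed.

Lemma mxtrace_ineq_schwarz :
  (forall K X : 'M[algC]_m, psd X -> ker_sub X (mxadj K) ->
     \tr (mxadj (psi K) *m mpinv (psi X) *m psi K) <= \tr (mxadj K *m mpinv X *m K)) ->
  forall (Z : 'M[algC]_n) (X : 'M[algC]_m), psd X -> psd (X - 1%:M) ->
    \tr (X *m (phi Z *m mxadj (phi Z))) <= \tr (X *m phi (Z *m mxadj Z)).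
Proof.
move=> tr_ineq Z X X_psd X_ge1.
have X_herm := psd_herm X_psd; have Y_psd := hs_adjoint_psd X_psd.
set Y := psi X in Y_psd *; set F := phi Z; set K := X *m F.
have XK : ker_sub X (mxadj K).
  by move=> v Xv0; rewrite mxadj_mul X_herm -mulmxA Xv0 mulmx0.
have := tr_ineq K X X_psd XK; rewrite mpinv_quad_mulmx // => ineq.
have YYZ : phi (Y *m mpinv Y *m Z) = F.
  have -> : Y *m mpinv Y *m Z = Z - (1%:M - Y *m mpinv Y) *m Z.
    by rewrite mulmxBl mul1mx opprB addrC subrK.
  by rewrite linearB /= positive_map_mpinv_kernel // subr0.
have := mxtrace_mpinv_cross_le (psi K) Z Y_psd.
rewrite -mulmxA -phi_psi YYZ mxadj_mul X_herm.
rewrite (conj_Creal (ger0_real (mxtrace_mxadj_mul_ge0 F X_psd))).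
rewrite -mxtrace_phi_mul_mxadj // => cross.
rewrite mulmxA mxtrace_mulC mulmxA -(lerD2l (\tr (mxadj F *m X *m F))).
by apply: le_trans cross _; rewrite lerD2r.
Qed.

End PositiveMap.

Theorem theorem1p4 (n m : nat) (phi : {linear 'M[algC]_n -> 'M[algC]_m})
  (psi : 'M[algC]_m -> 'M[algC]_n) :
  positive_map phi -> hs_adjoint phi psi ->
  (forall K X : 'M[algC]_m, psd X -> ker_sub X (mxadj K) ->
     \tr (mxadj (psi K) *m mpinv (psi X) *m psi K) <= \tr (mxadj K *m mpinv X *m K))
  <->
  (forall K : 'M[algC]_n, loewner_ge (phi (mxadj K *m K)) (mxadj (phi K) *m phi K)).
Proof.
move=> phi_pos phi_psi; split; last exact: schwarz_mxtrace_ineq.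
move=> tr_ineq K; rewrite -[K]mxadjK; move: (mxadj K) => {K} Z u.
rewrite mxadjK positive_map_mxadj // mxadjK -/(sesq _ u u).
set D := phi (Z *m mxadj Z) - phi Z *m mxadj (phi Z).
apply: (@affine_ge0_slope_ge0 _ (\tr D)) => s s_ge0.
pose X := 1%:M + s *: (u *m mxadj u).
have suu_psd : psd (s *: (u *m mxadj u)) := psdZ s_ge0 (psd_mul_mxadj u).
have X_ge1 : psd (X - 1%:M) by rewrite addrAC subrr add0r.
have X_psd : psd X := psdD (@psd1 m) suu_psd.
have ineq := mxtrace_ineq_schwarz phi_pos phi_psi tr_ineq Z X_psd X_ge1.
rewrite sesq_mxtrace mxtrace_mulC -mxtraceZ scalemxAl -{1}[D]mul1mx -mxtraceD.
by rewrite -mulmxDl -/X mulmxBr linearB /= subr_ge0.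
Qed.
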